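(* For every session type $S$ and every process $P$: if there exist a trace $t$ and a process $P'$ such that $\langle P ; [\![ S ]\!] \rangle \xRightarrow{t} \langle P' ; \mathsf{no}_P \rangle$, then the typing judgement $\emptyset\cdot\emptyset \vdash P : S$ is not derivable.
   Context: Values $v,u,w$ (including tuples), value variables $x,y,z$, process variables $X,Y$; $a$ ranges over values and value variables. Boolean predicates $A$ include $\mathsf{tt},\mathsf{ff}$, equalities/comparisons of values, conjunction, negation, and for each base type $\mathsf{B}$ a predicate $\mathsf{isValue}_{\mathsf{B}}(v)$ that evaluates to $\mathsf{tt}$ if $v$ is of type $\mathsf{B}$ and to $\mathsf{ff}$ otherwise; $A\Downarrow\mathsf{tt}$ / $A\Downarrow\mathsf{ff}$ denote evaluation. Predicates are type-checked by standard rules ($\Gamma\vdash A:\mathsf{Bool}$). Processes: $P,Q ::= \triangleleft \mathtt{l}(a).P \mid \triangleright\{\mathtt{l}_i(x_i).P_i\}_{i\in I} \mid \mu_X.P \mid X \mid \mathsf{if}\ A\ \mathsf{then}\ P\ \mathsf{else}\ Q \mid \mathbf{0}$, with guarded recursion; $x_i$ is bound in $P_i$, $X$ in $\mu_X.P$. Process transitions: $\mu_X.P \xrightarrow{\tau} P[\mu_X.P/X]$; $\triangleleft\mathtt{l}(v).P \xrightarrow{\triangleleft \mathtt{l}(v)} P$; $\triangleright\{\mathtt{l}_i(x_i).P_i\}_{i\in I} \xrightarrow{\triangleright \mathtt{l}_j(v)} P_j[v/x_j]$ for $j\in I$; $\mathsf{if}\ A\ \mathsf{then}\ P\ \mathsf{else}\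 Q \xrightarrow{\tau} P$ if $A\Downarrow\mathsf{tt}$ and $\xrightarrow{\tau} Q$ if $A\Downarrow\mathsf{ff}$. Base types $\mathsf{B} ::= \mathsf{Int}\mid\mathsf{Str}\mid\mathsf{Bool}\mid\dots\mid(\mathsf{B},\mathsf{B})$. Session types: $S ::= \oplus\{!\mathtt{l}_i(\mathsf{B}_i).S_i\}_{i\in I} \mid \&\{?\mathtt{l}_i(\mathsf{B}_i).S_i\}_{i\in I} \mid \mathsf{rec}\ X.S \mid X \mid \mathsf{end}$, with $I\neq\emptyset$, labels $\mathtt{l}_i$ pairwise distinct, guarded recursion; types are equi-recursive ($\mathsf{rec}\ X.S$ is identified with $S[\mathsf{rec}\ X.S/X]$). Typing uses $\Theta$ (partial map from process variables to session types) and $\Gamma$ (partial map from value variables to base types). $\Gamma\vdash x:\mathsf{B}$ if $\Gamma(x)=\mathsf{B}$; $\Gamma\vdash v:\mathsf{B}$ if $v\in\mathsf{B}$. Process rules: (tBra) if for all $i\in I$, $\Theta\cdot\Gamma,x_i:\mathsf{B}_i\vdash P_i:S_i$, then $\Theta\cdot\Gamma\vdash \triangleright\{\mathtt{l}_i(x_i).P_i\}_{i\in I\cup J} : \&\{?\mathtt{l}_i(\mathsf{B}_i).S_i\}_{i\in I}$; (tSel) if there is $i\in I$ with $\mathtt{l}=\mathtt{l}_i$, $\Gamma\vdash a:\mathsf{B}_i$ and $\Theta\cdot\Gamma\vdash P:S_i$, then $\Theta\cdot\Gamma\vdash \triangleleft\mathtt{l}(a).P : \oplus\{!\mathtt{l}_i(\mathsf{B}_i).S_i\}_{i\in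 I}$; (tRec) $\Theta,X:S\cdot\Gamma\vdash P:S$ implies $\Theta\cdot\Gamma\vdash\mu_X.P:S$; (tPVar) $\Theta(X)=S$ implies $\Theta\cdot\Gamma\vdash X:S$; (tIf) $\Gamma\vdash A:\mathsf{Bool}$, $\Theta\cdot\Gamma\vdash P:S$, $\Theta\cdot\Gamma\vdash Q:S$ imply $\Theta\cdot\Gamma\vdash \mathsf{if}\ A\ \mathsf{then}\ P\ \mathsf{else}\ Q:S$; (tNil) $\Theta\cdot\Gamma\vdash\mathbf{0}:\mathsf{end}$. Monitors: $M,N ::= \triangleleft\mathtt{l}(a).M \mid \triangleright\{\mathtt{l}_i(x_i).M_i\}_{i\in I} \mid \blacktriangle\mathtt{l}(a).M \mid \blacktriangledown\{\mathtt{l}_i(x_i).M_i\}_{i\in I} \mid \mu_X.M \mid X \mid \mathsf{if}\ A\ \mathsf{then}\ M\ \mathsf{else}\ N \mid \mathbf{0} \mid \mathsf{no}_P \mid \mathsf{no}_E$ ($\triangleleft,\triangleright$: send to / receive from the monitored process; $\blacktriangle,\blacktriangledown$: send to / receive from the environment). Monitor transitions: $\triangleleft\mathtt{l}(v).M\xrightarrow{\triangleleft\mathtt{l}(v)}M$; $\blacktriangle\mathtt{l}(v).M\xrightarrow{\blacktriangle\mathtt{l}(v)}M$; $\mu_X.M\xrightarrow{\tau}M[\mu_X.M/X]$; $\triangleright\{\mathtt{l}_i(x_i).M_i\}_{i\in I}\xrightarrow{\triangleright\mathtt{l}_j(v)}M_j[v/x_j]$ and $\blacktriangledown\{\mathtt{l}_i(x_i).M_i\}_{i\in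 I}\xrightarrow{\blacktriangledown\mathtt{l}_j(v)}M_j[v/x_j]$ for $j\in I$; conditionals as for processes; violations: $\triangleright\{\mathtt{l}_i(x_i).M_i\}_{i\in I}\xrightarrow{\triangleright\mathtt{l}(v)}\mathsf{no}_P$ and $\blacktriangledown\{\mathtt{l}_i(x_i).M_i\}_{i\in I}\xrightarrow{\blacktriangledown\mathtt{l}(v)}\mathsf{no}_E$ whenever $\mathtt{l}\neq\mathtt{l}_i$ for all $i\in I$. Composite system $\langle P;M\rangle$: if $P\xrightarrow{\triangleleft\mathtt{l}(v)}P'$ and $M\xrightarrow{\triangleright\mathtt{l}(v)}M'$ then $\langle P;M\rangle\xrightarrow{\tau}\langle P';M'\rangle$; if $P\xrightarrow{\triangleright\mathtt{l}(v)}P'$ and $M\xrightarrow{\triangleleft\mathtt{l}(v)}M'$ then $\langle P;M\rangle\xrightarrow{\tau}\langle P';M'\rangle$; if $M\xrightarrow{\alpha}M'$ with $\alpha\in\{\blacktriangle\mathtt{l}(v),\blacktriangledown\mathtt{l}(v)\}$ then $\langle P;M\rangle\xrightarrow{\alpha}\langle P;M'\rangle$; if $P\xrightarrow{\tau}P'$ then $\langle P;M\rangle\xrightarrow{\tau}\langle P';M\rangle$; if $M\xrightarrow{\tau}M'$ then $\langle P;M\rangle\xrightarrow{\tau}\langle P;M'\rangle$. A trace $t$ is a finite sequence of actions $\blacktriangle\mathtt{l}(v)$, $\blacktriangledown\mathtt{l}(v)$; $\xRightarrow{t}$ is a sequence of transitions whose visible labels are $t$, interleaved with finitely many $\tau$-transitions.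 Monitor synthesis $[\![-]\!]$: $[\![\oplus\{!\mathtt{l}_i(\mathsf{B}_i).S_i\}_{i\in I}]\!] = \triangleright\{\mathtt{l}_i(x_i).\,\mathsf{if}\ \mathsf{isValue}_{\mathsf{B}_i}(x_i)\ \mathsf{then}\ \blacktriangle\mathtt{l}_i(x_i).[\![S_i]\!]\ \mathsf{else}\ \mathsf{no}_P\}_{i\in I}$; $[\![\&\{?\mathtt{l}_i(\mathsf{B}_i).S_i\}_{i\in I}]\!] = \blacktriangledown\{\mathtt{l}_i(x_i).\,\mathsf{if}\ \mathsf{isValue}_{\mathsf{B}_i}(x_i)\ \mathsf{then}\ \triangleleft\mathtt{l}_i(x_i).[\![S_i]\!]\ \mathsf{else}\ \mathsf{no}_E\}_{i\in I}$; $[\![\mathsf{rec}\ X.S]\!]=\mu_X.[\![S]\!]$; $[\![X]\!]=X$; $[\![\mathsf{end}]\!]=\mathbf{0}$. *)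

From Stdlib Require Import List ZArith String Bool Arith Permutation.
Import ListNotations.

Definition label := nat.
Definition var := nat.

Inductive btype : Type :=
| BInt | BStr | BBool | BPair (B1 B2 : btype).

Inductive val : Type :=
| VInt (z : Z) | VStr (s : string) | VBool (b : bool) | VPair (v1 v2 : val).

Fixpoint has_btype (v : val) (B : btype) : bool :=
  match v, B with
  | VInt _, BInt => true
  | VStr _, BStr => true
  | VBool _, BBool => true
  | VPair v1 v2, BPair B1 B2 => has_btype v1 B1 && has_btype v2 B2
  | _, _ => false
  end.

Fixpoint val_eqb (v w : val) : bool :=
  match v, w with
  | VInt a, VInt b => Z.eqb a b
  | VStr a, VStr b => String.eqb a b
  | VBool a, VBool b => Bool.eqb a b
  | VPair a1 a2, VPair b1 b2 => val_eqb a1 b1 && val_eqb a2 b2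
  | _, _ => false
  end.

Inductive vexp : Type := EVal (v : val) | EVar (x : var).

Inductive bpred : Type :=
| ATt | AFf
| AEq (a1 a2 : vexp)
| ALe (a1 a2 : vexp)
| AAnd (A1 A2 : bpred)
| ANot (A : bpred)
| AIsVal (B : btype) (a : vexp).

(* A evaluates to b (only closed predicates evaluate) *)
Fixpoint peval (A : bpred) : option bool :=
  match A with
  | ATt => Some true
  | AFf => Some false
  | AEq (EVal v) (EVal w) => Some (val_eqb v w)
  | ALe (EVal (VInt a)) (EVal (VInt b)) => Some (Z.leb a b)
  | AAnd A1 A2 =>
      match peval A1, peval A2 with
      | Some b1, Some b2 => Some (b1 && b2)
      | _, _ => None
      end
  | ANot A => option_map negb (peval A)
  | AIsVal B (EVal v) => Some (has_btype v B)
  | _ => None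
  end.

Definition venv := var -> option btype.
Definition venv_empty : venv := fun _ => None.
Definition venv_upd (G : venv) (x : var) (B : btype) : venv :=
  fun y => if Nat.eqb y x then Some B else G y.

Definition vexp_typed (G : venv) (a : vexp) (B : btype) : Prop :=
  match a with
  | EVar x => G x = Some B
  | EVal v => has_btype v B = true
  end.

Inductive pred_typed (G : venv) : bpred -> Prop :=
| ptTt : pred_typed G ATt
| ptFf : pred_typed G AFf
| ptEq : forall a1 a2 B, vexp_typed G a1 B -> vexp_typed G a2 B -> pred_typed G (AEq a1 a2)
| ptLe : forall a1 a2, vexp_typed G a1 BInt -> vexp_typed G a2 BInt -> pred_typed G (ALe a1 a2)
| ptAnd : forall A1 A2, pred_typed G A1 -> pred_typed G A2 -> pred_typed G (AAnd A1 A2)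
| ptNot : forall A, pred_typed G A -> pred_typed G (ANot A)
| ptIsVal : forall B a B', vexp_typed G a B' -> pred_typed G (AIsVal B a).

Definition vsub_exp (x : var) (v : val) (a : vexp) : vexp :=
  match a with
  | EVar y => if Nat.eqb y x then EVal v else a
  | EVal _ => a
  end.

Fixpoint vsub_pred (x : var) (v : val) (A : bpred) : bpred :=
  match A with
  | AEq a1 a2 => AEq (vsub_exp x v a1) (vsub_exp x v a2)
  | ALe a1 a2 => ALe (vsub_exp x v a1) (vsub_exp x v a2)
  | AAnd A1 A2 => AAnd (vsub_pred x v A1) (vsub_pred x v A2)
  | ANot A => ANot (vsub_pred x v A)
  | AIsVal B a => AIsVal B (vsub_exp x v a)
  | _ => A
  end.

Inductive act : Type :=
| AOut (l : label) (v : val)    (* <| l(v)  : send (process) / send to process (monitor) *)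
| AIn (l : label) (v : val)
| AOutE (l : label) (v : val)   (* black up-triangle: monitor sends to environment *)
| AInE (l : label) (v : val)    (* black down-triangle: monitor receives from environment *)
| ATau.

(* ---------- processes (recursion variables as de Bruijn indices) ---------- *)
Inductive proc : Type :=
| PSend (l : label) (a : vexp) (P : proc)
| PBranch (bs : list (label * var * proc))
| PRec (P : proc)
| PVar (n : nat)
| PIf (A : bpred) (P Q : proc)
| PNil.

Fixpoint plift (c : nat) (P : proc) : proc :=
  match P with
  | PSend l a P => PSend l a (plift c P)
  | PBranch bs => PBranch (map (fun '(lx, Q) => (lx, plift c Q)) bs)
  | PRec P => PRec (plift (S c) P)
  | PVar n => if c <=? n then PVar (S n) else PVar n
  | PIf A P Q => PIf A (plift c P) (plift c Q)
  | PNil => PNil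
  end.

Fixpoint psubst (k : nat) (Q : proc) (P : proc) : proc :=
  match P with
  | PSend l a P => PSend l a (psubst k Q P)
  | PBranch bs => PBranch (map (fun '(lx, R) => (lx, psubst k Q R)) bs)
  | PRec P => PRec (psubst (S k) (plift 0 Q) P)
  | PVar n => if Nat.eqb n k then Q else if k <? n then PVar (pred n) else PVar n
  | PIf A P1 P2 => PIf A (psubst k Q P1) (psubst k Q P2)
  | PNil => PNil
  end.

(* P[v/x]  (values are closed, so no capture) *)
Fixpoint pvsubst (x : var) (v : val) (P : proc) : proc :=
  match P with
  | PSend l a P => PSend l (vsub_exp x v a) (pvsubst x v P)
  | PBranch bs =>
      PBranch (map (fun '(ly, R) => (ly, if Nat.eqb (snd ly) x then R else pvsubst x v R)) bs)
  | PRec P => PRec (pvsubst x v P)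
  | PVar n => PVar n
  | PIf A P1 P2 => PIf (vsub_pred x v A) (pvsubst x v P1) (pvsubst x v P2)
  | PNil => PNil
  end.

Fixpoint punguarded (k : nat) (P : proc) : bool :=
  match P with
  | PVar n => Nat.eqb n k
  | PRec P => punguarded (S k) P
  | PIf _ P Q => punguarded k P || punguarded k Q
  | _ => false
  end.

Fixpoint pguarded (P : proc) : Prop :=
  match P with
  | PSend _ _ P => pguarded P
  | PBranch bs => fold_right and True (map (fun '(_, Q) => pguarded Q) bs)
  | PRec P => punguarded 0 P = false /\ pguarded P
  | PVar _ => True
  | PIf _ P Q => pguarded P /\ pguarded Q
  | PNil => True
  end.

Inductive ptrans : proc -> act -> proc -> Prop :=
| ptr_rec : forall P, ptrans (PRec P) ATau (psubst 0 (PRec P) P)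
| ptr_send : forall l v P, ptrans (PSend l (EVal v) P) (AOut l v) P
| ptr_branch : forall bs l x P v,
    In (l, x, P) bs -> ptrans (PBranch bs) (AIn l v) (pvsubst x v P)
| ptr_if_t : forall A P Q, peval A = Some true -> ptrans (PIf A P Q) ATau P
| ptr_if_f : forall A P Q, peval A = Some false -> ptrans (PIf A P Q) ATau Q.

(* ---------- session types (recursion variables as de Bruijn indices) ---------- *)
Inductive stype : Type :=
| TSel (bs : list (label * btype * stype))
| TBra (bs : list (label * btype * stype))
| TRec (S : stype)
| TVar (n : nat)
| TEnd.

Fixpoint tlift (c : nat) (S : stype) : stype :=
  match S with
  | TSel bs => TSel (map (fun '(lb, T) => (lb, tlift c T)) bs)
  | TBra bs => TBra (map (fun '(lb, T) => (lb, tlift c T)) bs)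
  | TRec T => TRec (tlift (Datatypes.S c) T)
  | TVar n => if c <=? n then TVar (Datatypes.S n) else TVar n
  | TEnd => TEnd
  end.

Fixpoint tsubst (k : nat) (U : stype) (S : stype) : stype :=
  match S with
  | TSel bs => TSel (map (fun '(lb, T) => (lb, tsubst k U T)) bs)
  | TBra bs => TBra (map (fun '(lb, T) => (lb, tsubst k U T)) bs)
  | TRec T => TRec (tsubst (Datatypes.S k) (tlift 0 U) T)
  | TVar n => if Nat.eqb n k then U else if k <? n then TVar (pred n) else TVar n
  | TEnd => TEnd
  end.

Fixpoint tunguarded (k : nat) (S : stype) : bool :=
  match S with
  | TVar n => Nat.eqb n k
  | TRec T => tunguarded (Datatypes.S k) T
  | _ => false
  end.

Definition blabel {A B : Type} (b : label * A * B) : label := fst (fst b).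

Fixpoint wf_stype (S : stype) : Prop :=
  match S with
  | TSel bs | TBra bs =>
      bs <> [] /\ NoDup (map blabel bs) /\
      fold_right and True (map (fun '(_, T) => wf_stype T) bs)
  | TRec T => tunguarded 0 T = false /\ wf_stype T
  | TVar _ => True
  | TEnd => True
  end.

(* equi-recursive identification: the congruence generated by
   rec X.S = S[rec X.S/X] (and by the irrelevance of the order of branches) *)
Inductive teq : stype -> stype -> Prop :=
| teq_refl : forall S, teq S S
| teq_sym : forall S T, teq S T -> teq T S
| teq_trans : forall S T U, teq S T -> teq T U -> teq S U
| teq_unfold : forall S, teq (TRec S) (tsubst 0 (TRec S) S)
| teq_rec : forall S T, teq S T -> teq (TRec S) (TRec T)
| teq_sel : forall bs1 bs2,
    Forall2 (fun b1 b2 => fst b1 = fst b2 /\ teq (snd b1) (snd b2)) bs1 bs2 ->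
    teq (TSel bs1) (TSel bs2)
| teq_bra : forall bs1 bs2,
    Forall2 (fun b1 b2 => fst b1 = fst b2 /\ teq (snd b1) (snd b2)) bs1 bs2 ->
    teq (TBra bs1) (TBra bs2)
| teq_sel_perm : forall bs1 bs2, Permutation bs1 bs2 -> teq (TSel bs1) (TSel bs2)
| teq_bra_perm : forall bs1 bs2, Permutation bs1 bs2 -> teq (TBra bs1) (TBra bs2).

Definition penv := list stype.   (* Theta, indexed by de Bruijn process variables *)

Inductive typed : penv -> venv -> proc -> stype -> Prop :=
| tBra : forall Th G pbs tbs,
    NoDup (map blabel pbs) ->
    (forall l B S, In (l, B, S) tbs ->
       exists x P, In (l, x, P) pbs /\ typed Th (venv_upd G x B) P S) ->
    typed Th G (PBranch pbs) (TBra tbs)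
| tSel : forall Th G l a P tbs B S,
    In (l, B, S) tbs -> vexp_typed G a B -> typed Th G P S ->
    typed Th G (PSend l a P) (TSel tbs)
| tRec : forall Th G P S, typed (S :: Th) G P S -> typed Th G (PRec P) S
| tPVar : forall Th G n S, nth_error Th n = Some S -> typed Th G (PVar n) S
| tIf : forall Th G A P Q S,
    pred_typed G A -> typed Th G P S -> typed Th G Q S -> typed Th G (PIf A P Q) S
| tNil : forall Th G, typed Th G PNil TEnd
| tEq : forall Th G P S S', typed Th G P S -> teq S S' -> typed Th G P S'.

Inductive mon : Type :=
| MSendP (l : label) (a : vexp) (M : mon)
| MRecvP (bs : list (label * var * mon))
| MSendE (l : label) (a : vexp) (M : mon)
| MRecvE (bs : list (label * var * mon))
| MRec (M : mon)
| MVar (n : nat)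
| MIf (A : bpred) (M N : mon)
| MNil
| MNoP
| MNoE.

Fixpoint mlift (c : nat) (M : mon) : mon :=
  match M with
  | MSendP l a M => MSendP l a (mlift c M)
  | MRecvP bs => MRecvP (map (fun '(lx, N) => (lx, mlift c N)) bs)
  | MSendE l a M => MSendE l a (mlift c M)
  | MRecvE bs => MRecvE (map (fun '(lx, N) => (lx, mlift c N)) bs)
  | MRec M => MRec (mlift (S c) M)
  | MVar n => if c <=? n then MVar (S n) else MVar n
  | MIf A M N => MIf A (mlift c M) (mlift c N)
  | M => M
  end.

Fixpoint msubst (k : nat) (Q : mon) (M : mon) : mon :=
  match M with
  | MSendP l a M => MSendP l a (msubst k Q M)
  | MRecvP bs => MRecvP (map (fun '(lx, N) => (lx, msubst k Q N)) bs)
  | MSendE l a M => MSendE l a (msubst k Q M)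
  | MRecvE bs => MRecvE (map (fun '(lx, N) => (lx, msubst k Q N)) bs)
  | MRec M => MRec (msubst (S k) (mlift 0 Q) M)
  | MVar n => if Nat.eqb n k then Q else if k <? n then MVar (pred n) else MVar n
  | MIf A M N => MIf A (msubst k Q M) (msubst k Q N)
  | M => M
  end.

Fixpoint mvsubst (x : var) (v : val) (M : mon) : mon :=
  match M with
  | MSendP l a M => MSendP l (vsub_exp x v a) (mvsubst x v M)
  | MRecvP bs =>
      MRecvP (map (fun '(ly, N) => (ly, if Nat.eqb (snd ly) x then N else mvsubst x v N)) bs)
  | MSendE l a M => MSendE l (vsub_exp x v a) (mvsubst x v M)
  | MRecvE bs =>
      MRecvE (map (fun '(ly, N) => (ly, if Nat.eqb (snd ly) x then N else mvsubst x v N)) bs)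
  | MRec M => MRec (mvsubst x v M)
  | MIf A M N => MIf (vsub_pred x v A) (mvsubst x v M) (mvsubst x v N)
  | M => M
  end.

Inductive mtrans : mon -> act -> mon -> Prop :=
| mtr_sendP : forall l v M, mtrans (MSendP l (EVal v) M) (AOut l v) M
| mtr_sendE : forall l v M, mtrans (MSendE l (EVal v) M) (AOutE l v) M
| mtr_rec : forall M, mtrans (MRec M) ATau (msubst 0 (MRec M) M)
| mtr_recvP : forall bs l x M v,
    In (l, x, M) bs -> mtrans (MRecvP bs) (AIn l v) (mvsubst x v M)
| mtr_recvE : forall bs l x M v,
    In (l, x, M) bs -> mtrans (MRecvE bs) (AInE l v) (mvsubst x v M)
| mtr_if_t : forall A M N, peval A = Some true -> mtrans (MIf A M N) ATau M
| mtr_if_f : forall A M N, peval A = Some false -> mtrans (MIf A M N) ATau N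
| mtr_violP : forall bs l v,
    ~ In l (map blabel bs) -> mtrans (MRecvP bs) (AIn l v) MNoP
| mtr_violE : forall bs l v,
    ~ In l (map blabel bs) -> mtrans (MRecvE bs) (AInE l v) MNoE.

Inductive strans : proc * mon -> act -> proc * mon -> Prop :=
| st_out : forall P P' M M' l v,
    ptrans P (AOut l v) P' -> mtrans M (AIn l v) M' -> strans (P, M) ATau (P', M')
| st_in : forall P P' M M' l v,
    ptrans P (AIn l v) P' -> mtrans M (AOut l v) M' -> strans (P, M) ATau (P', M')
| st_envOut : forall P M M' l v,
    mtrans M (AOutE l v) M' -> strans (P, M) (AOutE l v) (P, M')
| st_envIn : forall P M M' l v,
    mtrans M (AInE l v) M' -> strans (P, M) (AInE l v) (P, M')
| st_tauP : forall P P' M, ptrans P ATau P' -> strans (P, M) ATau (P', M)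
| st_tauM : forall P M M', mtrans M ATau M' -> strans (P, M) ATau (P, M').

(* weak transitions  c ==t==> c'  (t: a trace of environment actions) *)
Inductive wtrans : proc * mon -> list act -> proc * mon -> Prop :=
| wt_refl : forall c, wtrans c [] c
| wt_tau : forall c c' t c'', strans c ATau c' -> wtrans c' t c'' -> wtrans c t c''
| wt_vis : forall c a c' t c'', a <> ATau -> strans c a c' -> wtrans c' t c'' ->
    wtrans c (a :: t) c''.

Definition xm : var := 0%nat.   (* the bound variable x_i of every synthesised branch *)

Fixpoint synth (S : stype) : mon :=
  match S with
  | TSel bs =>
      MRecvP (map (fun '(lB, T) =>
                (fst lB, xm,
                 MIf (AIsVal (snd lB) (EVar xm))
                     (MSendE (fst lB) (EVar xm) (synth T)) MNoP)) bs)
  | TBra bs =>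
      MRecvE (map (fun '(lB, T) =>
                (fst lB, xm,
                 MIf (AIsVal (snd lB) (EVar xm))
                     (MSendP (fst lB) (EVar xm) (synth T)) MNoE)) bs)
  | TRec T => MRec (synth T)
  | TVar n => MVar n
  | TEnd => MNil
  end.

(* Soundness of synthesised monitors is an invariant argument. A configuration
   <P; M> is sound when M is [[T]] for a type T of P, or one of the intermediate
   states that [[T]] passes through while forwarding a single message, or the
   environment-blame state no_E; no_P is not sound. Every transition preserves
   soundness: an output of a well-typed P carries a label of T and a value of the
   announced base type, so (labels being distinct) the monitor picks the branch the
   typing used and its type check succeeds; an input forwarded by the monitor is
   accepted by a branch typed for that label; tau-steps are subject reduction on the
   process side and unfolding on the monitor side. The one non-routine ingredient is
   inverting the equi-recursive equality of types: equal selection (branching) types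
   have matching branches, because equal types unfold to matching head normal forms. *)

From Stdlib Require Import List Arith Lia Permutation.
Import ListNotations.

Fixpoint stype_nested_ind (Pr : stype -> Prop)
  (Hsel : forall bs, Forall (fun b => Pr (snd b)) bs -> Pr (TSel bs))
  (Hbra : forall bs, Forall (fun b => Pr (snd b)) bs -> Pr (TBra bs))
  (Hrec : forall T, Pr T -> Pr (TRec T))
  (Hvar : forall n, Pr (TVar n))
  (Hend : Pr TEnd) (S : stype) {struct S} : Pr S :=
  let IH := stype_nested_ind Pr Hsel Hbra Hrec Hvar Hend in
  let fix branches bs : Forall (fun b => Pr (snd b)) bs :=
      match bs with
      | [] => Forall_nil _
      | (lb, T) :: r => @Forall_cons _ (fun b => Pr (snd b)) (lb, T) r (IH T) (branches r)
      end in
  match S with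
  | TSel bs => Hsel bs (branches bs)
  | TBra bs => Hbra bs (branches bs)
  | TRec T => Hrec T (IH T)
  | TVar n => Hvar n
  | TEnd => Hend
  end.

Arguments Nat.leb : simpl never.
Arguments Nat.eqb : simpl never.
Arguments Nat.ltb : simpl never.

Ltac index_cases :=
  repeat (simpl; match goal with
  | |- context [?a <=? ?b] => destruct (Nat.leb_spec a b)
  | |- context [?a =? ?b] => destruct (Nat.eqb_spec a b)
  | |- context [?a <? ?b] => destruct (Nat.ltb_spec a b)
  end); simpl; try (exfalso; lia); try (f_equal; lia); auto.

Ltac branches_case IH :=
  f_equal; rewrite ?map_map;
  (apply map_ext_in || (etransitivity; [|apply map_id]; apply map_ext_in));
  intros [[? ?] ?] Hin; rewrite Forall_forall in IH; specialize (IH _ Hin);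
  simpl in *; f_equal; auto.

Lemma tlift_tlift V i c : i <= c -> tlift (S c) (tlift i V) = tlift i (tlift c V).
Proof.
  revert i c; induction V as [bs IH|bs IH|T IH|n|] using stype_nested_ind; intros i c Hic;
    simpl; try (branches_case IH; fail).
  - f_equal. apply IH. lia.
  - index_cases.
  - reflexivity.
Qed.

Lemma tsubst_tlift U W c : tsubst c W (tlift c U) = U.
Proof.
  revert W c; induction U as [bs IH|bs IH|T IH|n|] using stype_nested_ind; intros W c;
    simpl; try (branches_case IH; fail).
  - f_equal. apply IH.
  - index_cases.
  - reflexivity.
Qed.

Lemma tlift_tsubst_below V U c k : c <= k ->
  tlift c (tsubst k U V) = tsubst (S k) (tlift c U) (tlift c V).
Proof.
  revert U c k; induction V as [bs IH|bs IH|T IH|n|] using stype_nested_ind; intros U c k Hck;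
    simpl; try (branches_case IH; fail).
  - f_equal. rewrite IH by lia. f_equal. apply tlift_tlift; lia.
  - index_cases.
  - reflexivity.
Qed.

Lemma tlift_tsubst_above V U k c : k <= c ->
  tlift c (tsubst k U V) = tsubst k (tlift c U) (tlift (S c) V).
Proof.
  revert U k c; induction V as [bs IH|bs IH|T IH|n|] using stype_nested_ind; intros U k c Hkc;
    simpl; try (branches_case IH; fail).
  - f_equal. rewrite IH by lia. f_equal. apply tlift_tlift; lia.
  - index_cases.
  - reflexivity.
Qed.

Lemma tsubst_tsubst V U W j k :
  tsubst (j + k) U (tsubst j W V)
  = tsubst j (tsubst (j + k) U W) (tsubst (S (j + k)) (tlift j U) V).
Proof.
  revert U W j k; induction V as [bs IH|bs IH|T IH|n|] using stype_nested_ind; intros U W j k;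
    simpl; try (branches_case IH; fail).
  - f_equal. rewrite (IH _ _ (S j) k). simpl. f_equal.
    + symmetry. apply tlift_tsubst_below. lia.
    + f_equal. apply tlift_tlift. lia.
  - index_cases; try (rewrite tsubst_tlift; auto).
    all: subst; index_cases.
  - reflexivity.
Qed.

Corollary tsubst_unfold X k U :
  tsubst k U (tsubst 0 (TRec X) X)
  = tsubst 0 (TRec (tsubst (S k) (tlift 0 U) X)) (tsubst (S k) (tlift 0 U) X).
Proof. exact (tsubst_tsubst X U (TRec X) 0 k). Qed.

Definition branches_rel (R : stype -> stype -> Prop) :
  list (label * btype * stype) -> list (label * btype * stype) -> Prop :=
  Forall2 (fun b1 b2 => fst b1 = fst b2 /\ R (snd b1) (snd b2)).

Lemma teq_nested_ind (Pr : stype -> stype -> Prop)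
  (Hrefl : forall S, Pr S S)
  (Hsym : forall S T, teq S T -> Pr S T -> Pr T S)
  (Htrans : forall S T U, teq S T -> Pr S T -> teq T U -> Pr T U -> Pr S U)
  (Hunfold : forall S, Pr (TRec S) (tsubst 0 (TRec S) S))
  (Hrec : forall S T, teq S T -> Pr S T -> Pr (TRec S) (TRec T))
  (Hsel : forall bs1 bs2, branches_rel (fun S T => teq S T /\ Pr S T) bs1 bs2 ->
     Pr (TSel bs1) (TSel bs2))
  (Hbra : forall bs1 bs2, branches_rel (fun S T => teq S T /\ Pr S T) bs1 bs2 ->
     Pr (TBra bs1) (TBra bs2))
  (Hsel_perm : forall bs1 bs2, Permutation bs1 bs2 -> Pr (TSel bs1) (TSel bs2))
  (Hbra_perm : forall bs1 bs2, Permutation bs1 bs2 -> Pr (TBra bs1) (TBra bs2)) :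
  forall S T, teq S T -> Pr S T.
Proof.
  fix IH 3. intros S T H.
  assert (branches : forall bs1 bs2, branches_rel teq bs1 bs2 ->
            branches_rel (fun S T => teq S T /\ Pr S T) bs1 bs2).
  { fix go 3. intros bs1 bs2 F. destruct F as [|b1 b2 r1 r2 [E t] F].
    - constructor.
    - constructor; [exact (conj E (conj t (IH _ _ t)))|exact (go _ _ F)]. }
  destruct H.
  - apply Hrefl.
  - apply Hsym; auto.
  - eapply Htrans; eauto.
  - apply Hunfold.
  - apply Hrec; auto.
  - apply Hsel, branches, H.
  - apply Hbra, branches, H.
  - apply Hsel_perm; auto.
  - apply Hbra_perm; auto.
Qed.

Lemma branches_rel_map (R R' : stype -> stype -> Prop) (f g : stype -> stype) bs1 bs2 :
  (forall S T, R S T -> R' (f S) (g T)) -> branches_rel R bs1 bs2 ->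
  branches_rel R' (map (fun '(lb, T) => (lb, f T)) bs1) (map (fun '(lb, T) => (lb, g T)) bs2).
Proof.
  intros Hfg H. induction H as [|[lb1 T1] [lb2 T2] r1 r2 [E HR] _ IH]; constructor; auto.
  simpl in *. auto.
Qed.

Ltac teq_congruence_induction H :=
  induction H using teq_nested_ind; intros;
  [ apply teq_refl
  | apply teq_sym; auto
  | eapply teq_trans; eauto
  | idtac
  | simpl; apply teq_rec; auto
  | simpl; apply teq_sel; eapply branches_rel_map; [|eassumption]; simpl; intros ? ? [_ ?]; auto
  | simpl; apply teq_bra; eapply branches_rel_map; [|eassumption]; simpl; intros ? ? [_ ?]; auto
  | simpl; apply teq_sel_perm, Permutation_map; auto
  | simpl; apply teq_bra_perm, Permutation_map; auto ].

Lemma teq_tlift S T c : teq S T -> teq (tlift c S) (tlift c T).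
Proof.
  intros H; revert c; teq_congruence_induction H.
  simpl. rewrite (tlift_tsubst_above S (TRec S) 0 c) by lia. apply teq_unfold.
Qed.

Lemma teq_tsubst_l S T k U : teq S T -> teq (tsubst k U S) (tsubst k U T).
Proof.
  intros H; revert k U; teq_congruence_induction H.
  simpl. rewrite tsubst_unfold. apply teq_unfold.
Qed.

Lemma teq_tsubst_r S k U U' : teq U U' -> teq (tsubst k U S) (tsubst k U' S).
Proof.
  revert k U U'; induction S as [bs IH|bs IH|T IH|n|] using stype_nested_ind; intros k U U' HU;
    simpl.
  - apply teq_sel. induction IH as [|[lb T] r HT _ IHr]; constructor; simpl; auto.
  - apply teq_bra. induction IH as [|[lb T] r HT _ IHr]; constructor; simpl; auto.
  - apply teq_rec, IH, teq_tlift, HU.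
  - destruct (n =? k); [exact HU|apply teq_refl].
  - apply teq_refl.
Qed.

Lemma teq_tsubst S T k U U' : teq S T -> teq U U' -> teq (tsubst k U S) (tsubst k U' T).
Proof.
  intros HS HU. eapply teq_trans; [apply teq_tsubst_l, HS|apply teq_tsubst_r, HU].
Qed.

(** * Inversion of type equality through head normal forms *)

Definition unfold_rec (S : stype) : stype :=
  match S with TRec T => tsubst 0 (TRec T) T | _ => S end.

Definition unfolds_to (S Z : stype) : Prop := exists n, Nat.iter n unfold_rec S = Z.

Definition hnf (Z : stype) : Prop := match Z with TRec _ => False | _ => True end.

Lemma iter_unfold_rec_hnf n Z : hnf Z -> Nat.iter n unfold_rec Z = Z.
Proof.
  intros h. induction n as [|n IH]; [reflexivity|].
  rewrite Nat.iter_succ, IH. destruct Z; simpl in *; tauto.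
Qed.

Lemma unfolds_to_refl S : unfolds_to S S.
Proof. exists 0. reflexivity. Qed.

Lemma unfolds_to_TRec X Z : unfolds_to (tsubst 0 (TRec X) X) Z -> unfolds_to (TRec X) Z.
Proof. intros [n H]. exists (S n). rewrite Nat.iter_succ_r. exact H. Qed.

Lemma unfolds_to_hnf_unique S Z1 Z2 :
  unfolds_to S Z1 -> unfolds_to S Z2 -> hnf Z1 -> hnf Z2 -> Z1 = Z2.
Proof.
  intros [n1 H1] [n2 H2] h1 h2.
  rewrite <- (iter_unfold_rec_hnf n2 Z1 h1), <- (iter_unfold_rec_hnf n1 Z2 h2), <- H1, <- H2,
    <- !Nat.iter_add, Nat.add_comm.
  reflexivity.
Qed.

Lemma unfolds_to_of_hnf Z W : hnf Z -> unfolds_to Z W -> W = Z.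
Proof. intros h [n H]. rewrite <- H. apply iter_unfold_rec_hnf, h. Qed.

Lemma unfolds_to_tsubst S Z k U : unfolds_to S Z -> unfolds_to (tsubst k U S) (tsubst k U Z).
Proof.
  intros [n H]. revert S H. induction n as [|n IH]; intros S H.
  - subst. apply unfolds_to_refl.
  - rewrite Nat.iter_succ_r in H. destruct S as [bs|bs|X|m|]; try exact (IH _ H).
    apply unfolds_to_TRec. simpl in *. rewrite <- tsubst_unfold. exact (IH _ H).
Qed.

Lemma unfolds_to_hnf_of_tsubst n S k U :
  hnf (Nat.iter n unfold_rec (tsubst k U S)) -> exists S', unfolds_to S S' /\ hnf S'.
Proof.
  revert S. induction n as [|n IH]; intros S h.
  all: destruct S as [bs|bs|X|m|];
    try (eexists; split; [apply unfolds_to_refl|exact I]).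
  - contradiction.
  - rewrite Nat.iter_succ_r in h. simpl unfold_rec in h. rewrite <- tsubst_unfold in h.
    destruct (IH _ h) as (S' & HS' & hS'). exists S'. split; [apply unfolds_to_TRec|]; auto.
Qed.

(* Unfolding [TRec X] cycles back to [TRec X]. *)
Lemma unfolds_to_var0_no_hnf X Z : unfolds_to X (TVar 0) -> unfolds_to (TRec X) Z -> ~ hnf Z.
Proof.
  intros H0 [n Hn] h.
  destruct (unfolds_to_tsubst _ _ 0 (TRec X) H0) as [m Hm]. simpl in Hm.
  assert (cycle : forall j, Nat.iter (j * S m) unfold_rec (TRec X) = TRec X).
  { induction j as [|j IHj]; [reflexivity|].
    rewrite Nat.mul_succ_l, Nat.iter_add, Nat.iter_succ_r. simpl unfold_rec.
    rewrite Hm. exact IHj. }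
  specialize (cycle n). replace (n * S m) with (n * m + n) in cycle by lia.
  rewrite Nat.iter_add, Hn, iter_unfold_rec_hnf in cycle by exact h.
  subst Z. rewrite cycle in h. exact h.
Qed.

Definition branches_sim (bs bs' : list (label * btype * stype)) : Prop :=
  forall l B X, In (l, B, X) bs -> exists X', In (l, B, X') bs' /\ teq X X'.

Definition hnf_match (Z Z' : stype) : Prop :=
  match Z, Z' with
  | TSel bs, TSel bs' | TBra bs, TBra bs' => branches_sim bs bs'
  | TEnd, TEnd => True
  | TVar n, TVar m => n = m
  | _, _ => False
  end.

Definition hnf_sim (S T : stype) : Prop :=
  forall Z, unfolds_to S Z -> hnf Z -> exists Z', unfolds_to T Z' /\ hnf_match Z Z'.

Lemma branches_sim_refl bs : branches_sim bs bs.
Proof. intros l B X H. exists X. split; [exact H|apply teq_refl]. Qed.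

Lemma branches_sim_trans bs1 bs2 bs3 :
  branches_sim bs1 bs2 -> branches_sim bs2 bs3 -> branches_sim bs1 bs3.
Proof.
  intros H12 H23 l B X H. destruct (H12 _ _ _ H) as (X' & H' & t1).
  destruct (H23 _ _ _ H') as (X'' & H'' & t2). exists X''. split; [|eapply teq_trans]; eauto.
Qed.

Lemma branches_sim_map bs bs' f g :
  (forall X X', teq X X' -> teq (f X) (g X')) -> branches_sim bs bs' ->
  branches_sim (map (fun '(lb, T) => (lb, f T)) bs) (map (fun '(lb, T) => (lb, g T)) bs').
Proof.
  intros Hfg H l B X Hin. apply in_map_iff in Hin as ([[l0 B0] X0] & E & Hin).
  injection E as <- <- <-. destruct (H _ _ _ Hin) as (X' & Hin' & t).
  exists (g X'). split; [apply in_map_iff; exists (l0, B0, X')|]; auto.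
Qed.

Lemma branches_sim_of_rel bs bs' : branches_rel teq bs bs' -> branches_sim bs bs'.
Proof.
  induction 1 as [|[lb1 T1] [lb2 T2] r1 r2 [E t] _ IH]; intros l B X Hin; simpl in *.
  - contradiction.
  - destruct Hin as [E'|Hin].
    + subst lb1. injection E' as -> ->. exists T2. auto.
    + destruct (IH _ _ _ Hin) as (X' & ? & ?). eauto.
Qed.

Lemma branches_sim_of_rel_sym bs bs' : branches_rel teq bs bs' -> branches_sim bs' bs.
Proof.
  intros H. apply branches_sim_of_rel, Forall2_flip.
  eapply Forall2_impl; [|exact H]. intros b1 b2 [E t]. split; [auto|apply teq_sym, t].
Qed.

Lemma branches_sim_perm bs bs' : Permutation bs bs' -> branches_sim bs bs'.
Proof.
  intros H l B X Hin. exists X. split; [eapply Permutation_in|apply teq_refl]; eauto.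
Qed.

Lemma hnf_match_refl Z : hnf Z -> hnf_match Z Z.
Proof. destruct Z; simpl; auto using branches_sim_refl. Qed.

Lemma hnf_match_trans Z1 Z2 Z3 : hnf_match Z1 Z2 -> hnf_match Z2 Z3 -> hnf_match Z1 Z3.
Proof.
  destruct Z1, Z2, Z3; simpl; try contradiction; eauto using branches_sim_trans; congruence.
Qed.

Lemma hnf_match_hnf_r Z Z' : hnf_match Z Z' -> hnf Z'.
Proof. destruct Z, Z'; simpl; tauto. Qed.

Lemma hnf_match_tsubst Z Z' k U U' : Z <> TVar k -> teq U U' -> hnf_match Z Z' ->
  hnf (tsubst k U Z) /\ hnf_match (tsubst k U Z) (tsubst k U' Z').
Proof.
  intros Hk HU. destruct Z as [bs|bs|X|n|], Z' as [bs'|bs'|X'|n'|]; simpl; try contradiction.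
  1, 2: split; [exact I|apply branches_sim_map; auto; intros; apply teq_tsubst; auto].
  - intros <-. destruct (Nat.eqb_spec n k); [congruence|].
    destruct (k <? n); simpl; auto.
  - auto.
Qed.

Lemma hnf_sim_refl S : hnf_sim S S.
Proof. intros Z HZ h. exists Z. auto using hnf_match_refl. Qed.

Lemma hnf_sim_of_hnf_match S T : hnf S -> hnf_match S T -> hnf_sim S T.
Proof.
  intros h m Z HZ _. apply unfolds_to_of_hnf in HZ as ->; [|exact h].
  exists T. split; [apply unfolds_to_refl|exact m].
Qed.

Lemma hnf_sim_trans S T U : hnf_sim S T -> hnf_sim T U -> hnf_sim S U.
Proof.
  intros H1 H2 Z HZ h. destruct (H1 _ HZ h) as (Z' & HZ' & m1).
  destruct (H2 _ HZ' (hnf_match_hnf_r _ _ m1)) as (Z'' & HZ'' & m2).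
  exists Z''. split; [|eapply hnf_match_trans]; eauto.
Qed.

Lemma hnf_sim_unfold X : hnf_sim (TRec X) (tsubst 0 (TRec X) X) /\
                         hnf_sim (tsubst 0 (TRec X) X) (TRec X).
Proof.
  split; intros Z HZ h; exists Z; split; auto using hnf_match_refl.
  - destruct HZ as [[|n] Hn]; [subst; contradiction|].
    exists n. rewrite Nat.iter_succ_r in Hn. exact Hn.
  - apply unfolds_to_TRec, HZ.
Qed.

Lemma hnf_sim_TRec S T : teq S T -> hnf_sim S T -> hnf_sim (TRec S) (TRec T).
Proof.
  intros t H Z HZ h.
  assert (HZ' := HZ). destruct HZ' as [[|n] Hn]; [subst; contradiction|].
  rewrite Nat.iter_succ_r in Hn. simpl unfold_rec in Hn.
  destruct (unfolds_to_hnf_of_tsubst n S 0 (TRec S)) as (S' & HS' & hS').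
  { rewrite Hn. exact h. }
  destruct (H _ HS' hS') as (T' & HT' & m).
  assert (Hv : S' <> TVar 0) by (intros ->; exact (unfolds_to_var0_no_hnf S Z HS' HZ h)).
  destruct (hnf_match_tsubst S' T' 0 (TRec S) (TRec T) Hv (teq_rec _ _ t) m) as [h' m'].
  exists (tsubst 0 (TRec T) T'). split.
  - apply unfolds_to_TRec, unfolds_to_tsubst, HT'.
  - replace Z with (tsubst 0 (TRec S) S'); [exact m'|].
    apply (unfolds_to_hnf_unique (TRec S)); auto.
    apply unfolds_to_TRec, unfolds_to_tsubst, HS'.
Qed.

Lemma teq_hnf_sim S T : teq S T -> hnf_sim S T /\ hnf_sim T S.
Proof.
  induction 1 using teq_nested_ind.
  - split; apply hnf_sim_refl.
  - tauto.
  - split; apply (hnf_sim_trans _ T); tauto.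
  - apply hnf_sim_unfold.
  - split; apply hnf_sim_TRec; auto using teq_sym; tauto.
  - split; apply hnf_sim_of_hnf_match; simpl; auto.
    + apply branches_sim_of_rel. eapply Forall2_impl; [|exact H]. simpl. tauto.
    + apply branches_sim_of_rel_sym. eapply Forall2_impl; [|exact H]. simpl. tauto.
  - split; apply hnf_sim_of_hnf_match; simpl; auto.
    + apply branches_sim_of_rel. eapply Forall2_impl; [|exact H]. simpl. tauto.
    + apply branches_sim_of_rel_sym. eapply Forall2_impl; [|exact H]. simpl. tauto.
  - split; apply hnf_sim_of_hnf_match; simpl; auto using branches_sim_perm, Permutation_sym.
  - split; apply hnf_sim_of_hnf_match; simpl; auto using branches_sim_perm, Permutation_sym.
Qed.

Lemma teq_TSel_branches bs bs' : teq (TSel bs) (TSel bs') -> branches_sim bs bs'.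
Proof.
  intros t. destruct (proj1 (teq_hnf_sim _ _ t) (TSel bs)) as (Z' & HZ' & m);
    [apply unfolds_to_refl|exact I|].
  apply unfolds_to_of_hnf in HZ' as ->; [exact m|exact I].
Qed.

Lemma teq_TBra_branches bs bs' : teq (TBra bs) (TBra bs') -> branches_sim bs bs'.
Proof.
  intros t. destruct (proj1 (teq_hnf_sim _ _ t) (TBra bs)) as (Z' & HZ' & m);
    [apply unfolds_to_refl|exact I|].
  apply unfolds_to_of_hnf in HZ' as ->; [exact m|exact I].
Qed.

Lemma typed_nested_ind (Pr : penv -> venv -> proc -> stype -> Prop)
  (HBra : forall Th G pbs tbs, NoDup (map blabel pbs) ->
     (forall l B S, In (l, B, S) tbs -> exists x P, In (l, x, P) pbs /\
        typed Th (venv_upd G x B) P S /\ Pr Th (venv_upd G x B) P S) ->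
     Pr Th G (PBranch pbs) (TBra tbs))
  (HSel : forall Th G l a P tbs B S, In (l, B, S) tbs -> vexp_typed G a B ->
     typed Th G P S -> Pr Th G P S -> Pr Th G (PSend l a P) (TSel tbs))
  (HRec : forall Th G P S, typed (S :: Th) G P S -> Pr (S :: Th) G P S -> Pr Th G (PRec P) S)
  (HVar : forall Th G n S, nth_error Th n = Some S -> Pr Th G (PVar n) S)
  (HIf : forall Th G A P Q S, pred_typed G A -> typed Th G P S -> Pr Th G P S ->
     typed Th G Q S -> Pr Th G Q S -> Pr Th G (PIf A P Q) S)
  (HNil : forall Th G, Pr Th G PNil TEnd)
  (HEq : forall Th G P S S', typed Th G P S -> Pr Th G P S -> teq S S' -> Pr Th G P S') :
  forall Th G P S, typed Th G P S -> Pr Th G P S.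
Proof.
  fix IH 5. intros Th G P S H. destruct H.
  - apply HBra; auto. intros l B S Hin.
    destruct (H0 l B S Hin) as (x & P & Hx & Ht). exists x, P. auto.
  - eapply HSel; eauto.
  - apply HRec; auto.
  - apply HVar; auto.
  - apply HIf; auto.
  - apply HNil.
  - eapply HEq; eauto.
Qed.

Lemma map_blabel_map {X Y : Type} (f : label * X * Y -> label * X * Y) bs :
  (forall b, fst (f b) = fst b) -> map blabel (map f bs) = map blabel bs.
Proof. intros Hf. rewrite map_map. apply map_ext. intros b. unfold blabel. now rewrite Hf. Qed.

Lemma In_map_snd {X Y : Type} (f : Y -> Y) (l : label) (x : X) (P : Y) bs :
  In (l, x, P) bs -> In (l, x, f P) (map (fun '(lx, Q) => (lx, f Q)) bs).
Proof. intros H. apply in_map_iff. exists (l, x, P). auto. Qed.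

Definition venv_incl (G G' : venv) : Prop := forall y B, G y = Some B -> G' y = Some B.

Lemma venv_incl_upd G G' x B : venv_incl G G' -> venv_incl (venv_upd G x B) (venv_upd G' x B).
Proof. intros H y B'. unfold venv_upd. destruct (y =? x); auto. Qed.

Lemma vexp_typed_weaken G G' a B : venv_incl G G' -> vexp_typed G a B -> vexp_typed G' a B.
Proof. destruct a; simpl; auto. Qed.

Lemma pred_typed_weaken G G' A : venv_incl G G' -> pred_typed G A -> pred_typed G' A.
Proof. intros HG. induction 1; econstructor; eauto using vexp_typed_weaken. Qed.

Lemma typed_weaken Th G G' P S : venv_incl G G' -> typed Th G P S -> typed Th G' P S.
Proof.
  intros HG H. revert G' HG.
  induction H using typed_nested_ind; intros G' HG.
  - constructor; auto. intros l B S Hin. destruct (H0 _ _ _ Hin) as (x & P & Hx & _ & IH).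
    exists x, P. auto using venv_incl_upd.
  - econstructor; eauto using vexp_typed_weaken.
  - constructor; auto.
  - constructor; auto.
  - constructor; eauto using pred_typed_weaken.
  - constructor.
  - econstructor; eauto.
Qed.

Lemma typed_empty_venv Th G P S : typed Th venv_empty P S -> typed Th G P S.
Proof. apply typed_weaken. discriminate. Qed.

Lemma vexp_typed_vsub G0 x B v a B0 :
  has_btype v B = true -> vexp_typed (venv_upd G0 x B) a B0 -> vexp_typed G0 (vsub_exp x v a) B0.
Proof.
  intros hv. destruct a as [w|y]; simpl; auto. unfold venv_upd.
  destruct (y =? x); simpl; [injection 1 as <-; exact hv|auto].
Qed.

Lemma pred_typed_vsub G x B v A G0 :
  (forall y, G y = venv_upd G0 x B y) -> has_btype v B = true ->
  pred_typed G A -> pred_typed G0 (vsub_pred x v A).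
Proof.
  intros HG hv. induction 1; simpl; econstructor; eauto;
    eapply vexp_typed_vsub; eauto; eapply vexp_typed_weaken; eauto; intros y B1; rewrite HG; auto.
Qed.

Lemma typed_pvsubst Th G P S G0 x B v :
  (forall y, G y = venv_upd G0 x B y) -> has_btype v B = true ->
  typed Th G P S -> typed Th G0 (pvsubst x v P) S.
Proof.
  intros HG hv H. revert G0 HG. induction H using typed_nested_ind; intros G0 HG; simpl.
  - constructor; [rewrite map_blabel_map by (intros [[? ?] ?]; reflexivity); exact H|].
    intros l B' S Hin. destruct (H0 _ _ _ Hin) as (y & P & Hy & Ht & IH).
    exists y, (if y =? x then P else pvsubst x v P).
    split; [apply in_map_iff; exists (l, y, P); auto|].
    destruct (Nat.eqb_spec y x) as [->|Hyx].
    + eapply typed_weaken; [|exact Ht]. intros z Bz. unfold venv_upd. rewrite HG.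
      unfold venv_upd. destruct (z =? x); auto.
    + apply IH. intros z. unfold venv_upd. rewrite HG. unfold venv_upd.
      destruct (Nat.eqb_spec z y), (Nat.eqb_spec z x); congruence.
  - eapply tSel; eauto. eapply vexp_typed_vsub; eauto.
    eapply vexp_typed_weaken; eauto. intros y B1. rewrite HG. auto.
  - constructor; auto.
  - constructor; auto.
  - constructor; eauto using pred_typed_vsub.
  - constructor.
  - econstructor; eauto.
Qed.

Lemma typed_plift Th1 Th2 G P S U :
  typed (Th1 ++ Th2) G P S -> typed (Th1 ++ U :: Th2) G (plift (length Th1) P) S.
Proof.
  intros H. remember (Th1 ++ Th2) as Th eqn:E. revert Th1 E.
  induction H using typed_nested_ind; intros Th1 E; subst; simpl.
  - constructor; [rewrite map_blabel_map by (intros [[? ?] ?]; reflexivity); exact H|].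
    intros l B S Hin. destruct (H0 _ _ _ Hin) as (y & P & Hy & _ & IH).
    exists y, (plift (length Th1) P). split; [exact (In_map_snd _ _ _ _ _ Hy)|auto].
  - econstructor; eauto.
  - constructor. exact (IHtyped (S :: Th1) eq_refl).
  - destruct (Nat.leb_spec (length Th1) n); constructor.
    + rewrite nth_error_app2 in * by (simpl; lia).
      replace (Datatypes.S n - length Th1) with (Datatypes.S (n - length Th1)) by lia. auto.
    + rewrite nth_error_app1 in * by lia. auto.
  - constructor; eauto.
  - constructor.
  - econstructor; eauto.
Qed.

Lemma typed_psubst Th1 Th2 G P S U R :
  (forall G', typed (Th1 ++ Th2) G' R U) ->
  typed (Th1 ++ U :: Th2) G P S -> typed (Th1 ++ Th2) G (psubst (length Th1) R P) S.
Proof.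
  intros HR H. remember (Th1 ++ U :: Th2) as Th eqn:E. revert Th1 R HR E.
  induction H using typed_nested_ind; intros Th1 R HR E; subst; simpl.
  - constructor; [rewrite map_blabel_map by (intros [[? ?] ?]; reflexivity); exact H|].
    intros l B S Hin. destruct (H0 _ _ _ Hin) as (y & P & Hy & _ & IH).
    exists y, (psubst (length Th1) R P). split; [exact (In_map_snd _ _ _ _ _ Hy)|auto].
  - econstructor; eauto.
  - constructor. apply (IHtyped (S :: Th1)); auto.
    intros G'. exact (typed_plift [] _ G' R U S (HR G')).
  - destruct (Nat.eqb_spec n (length Th1)) as [->|Hn].
    + rewrite nth_error_app2, Nat.sub_diag in H by lia. injection H as ->. auto.
    + destruct (Nat.ltb_spec (length Th1) n); constructor.
      * rewrite nth_error_app2 in * by lia.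
        replace (n - length Th1) with (Datatypes.S (pred n - length Th1)) in H by lia. auto.
      * rewrite nth_error_app1 in * by lia. auto.
  - constructor; eauto.
  - constructor.
  - econstructor; eauto.
Qed.

Lemma typed_PSend_inv Th G l a P T : typed Th G (PSend l a P) T ->
  exists tbs B S, In (l, B, S) tbs /\ vexp_typed G a B /\ typed Th G P S /\ teq (TSel tbs) T.
Proof.
  intros H. remember (PSend l a P) as Q eqn:E. induction H; inversion E; subst.
  - exists tbs, B, S. auto using teq_refl.
  - destruct IHtyped as (tbs & B & S0 & ? & ? & ? & ?); auto.
    exists tbs, B, S0. eauto using teq_trans.
Qed.

Lemma typed_PBranch_inv Th G pbs T : typed Th G (PBranch pbs) T ->
  exists tbs, NoDup (map blabel pbs) /\
    (forall l B S, In (l, B, S) tbs ->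
       exists x P, In (l, x, P) pbs /\ typed Th (venv_upd G x B) P S) /\
    teq (TBra tbs) T.
Proof.
  intros H. remember (PBranch pbs) as Q eqn:E. induction H; inversion E; subst.
  - exists tbs. auto using teq_refl.
  - destruct IHtyped as (tbs & ? & ? & ?); auto. exists tbs. eauto using teq_trans.
Qed.

Lemma typed_PRec_inv Th G P T : typed Th G (PRec P) T ->
  exists S, typed (S :: Th) G P S /\ teq S T.
Proof.
  intros H. remember (PRec P) as Q eqn:E. induction H; inversion E; subst.
  - exists S. auto using teq_refl.
  - destruct IHtyped as (S0 & ? & ?); auto. exists S0. eauto using teq_trans.
Qed.

Lemma typed_PIf_inv Th G A P Q T : typed Th G (PIf A P Q) T ->
  exists S, typed Th G P S /\ typed Th G Q S /\ teq S T.
Proof.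
  intros H. remember (PIf A P Q) as R eqn:E. induction H; inversion E; subst.
  - exists S. auto using teq_refl.
  - destruct IHtyped as (S0 & ? & ? & ?); auto. exists S0. eauto using teq_trans.
Qed.

Lemma typed_ptrans_tau P P' T :
  typed [] venv_empty P T -> ptrans P ATau P' -> typed [] venv_empty P' T.
Proof.
  intros Ht Hs. inversion Hs; subst.
  - apply typed_PRec_inv in Ht as (S & HP & t).
    apply (tEq _ _ _ S); [|exact t].
    apply (typed_psubst [] [] _ _ _ S (PRec P0)); [|exact HP].
    intros G'. apply typed_empty_venv, tRec, HP.
  - apply typed_PIf_inv in Ht as (S & HP & _ & t). eapply tEq; eauto.
  - apply typed_PIf_inv in Ht as (S & _ & HQ & t). eapply tEq; eauto.
Qed.

Ltac synth_branches_case IH :=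
  f_equal; rewrite !map_map; apply map_ext_in; intros [[? ?] ?] Hin;
  rewrite Forall_forall in IH; specialize (IH _ Hin); simpl in *; rewrite IH; reflexivity.

Lemma synth_tlift T c : synth (tlift c T) = mlift c (synth T).
Proof.
  revert c; induction T as [bs IH|bs IH|X IH|n|] using stype_nested_ind; intros c; simpl;
    try (synth_branches_case IH; fail).
  - f_equal. apply IH.
  - destruct (c <=? n); reflexivity.
  - reflexivity.
Qed.

Lemma synth_tsubst T k U : synth (tsubst k U T) = msubst k (synth U) (synth T).
Proof.
  revert k U; induction T as [bs IH|bs IH|X IH|n|] using stype_nested_ind; intros k U; simpl;
    try (synth_branches_case IH; fail).
  - f_equal. rewrite IH, synth_tlift. reflexivity.
  - destruct (n =? k); [reflexivity|]. destruct (k <? n); reflexivity.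
  - reflexivity.
Qed.

(* Every binder of a synthesised monitor is [xm], so the substitution stops at the first one. *)
Lemma mvsubst_synth T v : mvsubst xm v (synth T) = synth T.
Proof.
  induction T as [bs _|bs _|X IH|n|] using stype_nested_ind; simpl; f_equal; auto.
  all: rewrite map_map; apply map_ext; intros [[l B] X]; reflexivity.
Qed.

Fixpoint distinct_labels (S : stype) : Prop :=
  match S with
  | TSel bs | TBra bs =>
      NoDup (map blabel bs) /\ fold_right and True (map (fun '(_, T) => distinct_labels T) bs)
  | TRec T => distinct_labels T
  | _ => True
  end.

Lemma fold_right_and_map_iff (Q : stype -> Prop) (bs : list (label * btype * stype)) :
  fold_right and True (map (fun '(_, T) => Q T) bs) <-> (forall b, In b bs -> Q (snd b)).
Proof.
  induction bs as [|[lb T] r IH]; simpl.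
  - split; [intros _ b []|auto].
  - rewrite IH. split.
    + intros [HT Hr] b [<-|Hb]; auto.
    + intros H. split; [apply (H (lb, T))|]; auto.
Qed.

Lemma distinct_labels_TSel bs : distinct_labels (TSel bs) ->
  NoDup (map blabel bs) /\ forall b, In b bs -> distinct_labels (snd b).
Proof. simpl. rewrite fold_right_and_map_iff. tauto. Qed.

Lemma distinct_labels_TBra bs : distinct_labels (TBra bs) ->
  NoDup (map blabel bs) /\ forall b, In b bs -> distinct_labels (snd b).
Proof. simpl. rewrite fold_right_and_map_iff. tauto. Qed.

Lemma wf_stype_distinct_labels S : wf_stype S -> distinct_labels S.
Proof.
  induction S as [bs IH|bs IH|X IH|n|] using stype_nested_ind; simpl; try tauto.
  all: rewrite !fold_right_and_map_iff, Forall_forall in *.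
  all: intros (_ & N & F); auto.
Qed.

Ltac distinct_labels_branches_case IH N :=
  let F := fresh "F" in
  simpl in *; rewrite fold_right_and_map_iff in *;
  rewrite map_blabel_map by (intros [[? ?] ?]; reflexivity);
  destruct N as [N F]; split; [exact N|];
  intros [lb T] Hb; apply in_map_iff in Hb as ([lb0 T0] & E & Hb); injection E as <- <-;
  rewrite Forall_forall in IH; apply (IH _ Hb); auto; apply (F _ Hb).

Lemma distinct_labels_tlift U c : distinct_labels U -> distinct_labels (tlift c U).
Proof.
  revert c; induction U as [bs IH|bs IH|X IH|n|] using stype_nested_ind; intros c N.
  1, 2: distinct_labels_branches_case IH N.
  - apply IH, N.
  - simpl. destruct (c <=? n); exact I.
  - exact I.
Qed.

Lemma distinct_labels_tsubst X k U :
  distinct_labels U -> distinct_labels X -> distinct_labels (tsubst k U X).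
Proof.
  revert k U; induction X as [bs IH|bs IH|X IH|n|] using stype_nested_ind; intros k U NU N.
  1, 2: distinct_labels_branches_case IH N.
  - apply IH; auto using distinct_labels_tlift.
  - simpl. destruct (n =? k); [exact NU|]. destruct (k <? n); exact I.
  - exact I.
Qed.

Lemma NoDup_blabel_In_unique {X Y : Type} (bs : list (label * X * Y)) l x y x' y' :
  NoDup (map blabel bs) -> In (l, x, y) bs -> In (l, x', y') bs -> x = x' /\ y = y'.
Proof.
  induction bs as [|b r IH]; simpl; [contradiction|].
  inversion_clear 1 as [|? ? Nb Nr].
  intros [E1|H1] [E2|H2]; subst; eauto.
  - injection E2 as -> ->. auto.
  - exfalso. apply Nb, (in_map blabel _ _ H2).
  - exfalso. apply Nb, (in_map blabel _ _ H1).
Qed.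

Lemma synth_mtrans_AIn_inv T l v M' : mtrans (synth T) (AIn l v) M' ->
  exists bs, T = TSel bs /\
    ((exists B X, In (l, B, X) bs /\
        M' = MIf (AIsVal B (EVal v)) (MSendE l (EVal v) (synth X)) MNoP)
     \/ (~ In l (map blabel bs) /\ M' = MNoP)).
Proof.
  intros H. destruct T as [bs|bs|X|n|]; simpl in H;
    inversion H as [| | |? ? ? ? ? Hin| | | |? ? ? Hl|]; subst; exists bs; split; auto.
  - left. apply in_map_iff in Hin as ([[l0 B] X] & E & Hin). injection E as -> <- <-.
    exists B, X. split; [exact Hin|]. simpl. rewrite mvsubst_synth. reflexivity.
  - right. split; [|reflexivity].
    rewrite map_map in Hl. erewrite map_ext; [exact Hl|]. intros [[? ?] ?]. reflexivity.
Qed.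

Lemma synth_mtrans_AInE_inv T l v M' : mtrans (synth T) (AInE l v) M' ->
  exists bs, T = TBra bs /\
    ((exists B X, In (l, B, X) bs /\
        M' = MIf (AIsVal B (EVal v)) (MSendP l (EVal v) (synth X)) MNoE)
     \/ M' = MNoE).
Proof.
  intros H. destruct T as [bs|bs|X|n|]; simpl in H;
    inversion H as [| | | |? ? ? ? ? Hin| | | |]; subst; exists bs; split; auto.
  left. apply in_map_iff in Hin as ([[l0 B] X] & E & Hin). injection E as -> <- <-.
  exists B, X. split; [exact Hin|]. simpl. rewrite mvsubst_synth. reflexivity.
Qed.

Lemma synth_mtrans_ATau_inv T M' : mtrans (synth T) ATau M' ->
  exists X, T = TRec X /\ M' = synth (tsubst 0 (TRec X) X).
Proof.
  intros H. destruct T as [bs|bs|X|n|]; simpl in H; inversion H; subst.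
  exists X. split; [reflexivity|]. rewrite synth_tsubst. reflexivity.
Qed.

Lemma synth_no_AOut T l v M' : ~ mtrans (synth T) (AOut l v) M'.
Proof. destruct T; inversion 1. Qed.

Lemma synth_no_AOutE T l v M' : ~ mtrans (synth T) (AOutE l v) M'.
Proof. destruct T; inversion 1. Qed.

(** * The soundness invariant *)

Inductive sound_config : proc * mon -> Prop :=
| sc_synth P T : typed [] venv_empty P T -> distinct_labels T -> sound_config (P, synth T)
| sc_check_out P T l v B : typed [] venv_empty P T -> distinct_labels T -> has_btype v B = true ->
    sound_config (P, MIf (AIsVal B (EVal v)) (MSendE l (EVal v) (synth T)) MNoP)
| sc_send_env P T l v : typed [] venv_empty P T -> distinct_labels T ->
    sound_config (P, MSendE l (EVal v) (synth T))
| sc_check_in P tbs l B T v : typed [] venv_empty P (TBra tbs) -> In (l, B, T) tbs ->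
    distinct_labels T ->
    sound_config (P, MIf (AIsVal B (EVal v)) (MSendP l (EVal v) (synth T)) MNoE)
| sc_send_proc P tbs l B T v : typed [] venv_empty P (TBra tbs) -> In (l, B, T) tbs ->
    distinct_labels T -> has_btype v B = true ->
    sound_config (P, MSendP l (EVal v) (synth T))
| sc_blame_env P : sound_config (P, MNoE).

Lemma sound_config_not_blame_proc P : ~ sound_config (P, MNoP).
Proof. inversion 1. match goal with T : stype |- _ => destruct T; discriminate end. Qed.

Lemma sound_config_ptau P P' M :
  ptrans P ATau P' -> sound_config (P, M) -> sound_config (P', M).
Proof.
  intros Hp HI. inversion HI; subst; econstructor; eauto using typed_ptrans_tau.
Qed.

Lemma sound_config_mtau P M M' :
  mtrans M ATau M' -> sound_config (P, M) -> sound_config (P, M').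
Proof.
  intros Hm HI. inversion HI; subst.
  - apply synth_mtrans_ATau_inv in Hm as (X & -> & ->). constructor.
    + eapply tEq; [eassumption|apply teq_unfold].
    + apply distinct_labels_tsubst; assumption.
  - inversion Hm; subst; [constructor; assumption|simpl in *; congruence].
  - inversion Hm.
  - inversion Hm; subst; [|constructor]. simpl in *. econstructor; eauto; congruence.
  - inversion Hm.
  - inversion Hm.
Qed.

Lemma sound_config_env_out P M l v M' :
  mtrans M (AOutE l v) M' -> sound_config (P, M) -> sound_config (P, M').
Proof.
  intros Hm HI. inversion HI; subst; try (inversion Hm; fail).
  - exfalso. eapply synth_no_AOutE; eauto.
  - inversion Hm; subst. constructor; assumption.
Qed.

Lemma sound_config_env_in P M l v M' :
  mtrans M (AInE l v) M' -> sound_config (P, M) -> sound_config (P, M').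
Proof.
  intros Hm HI. inversion HI as [? T HT HN| | | | |]; subst; try (inversion Hm; fail).
  apply synth_mtrans_AInE_inv in Hm as (bs & -> & [(B & X & Hin & ->) | ->]); [|constructor].
  apply distinct_labels_TBra in HN as [_ F].
  eapply sc_check_in; eauto. exact (F _ Hin).
Qed.

Lemma sound_config_output P P' M M' l v :
  ptrans P (AOut l v) P' -> mtrans M (AIn l v) M' ->
  sound_config (P, M) -> sound_config (P', M').
Proof.
  intros Hp Hm HI. inversion HI as [? T HT HN| | | | |]; subst; try (inversion Hm; fail).
  apply synth_mtrans_AIn_inv in Hm as (bs & -> & Hm).
  apply distinct_labels_TSel in HN as [Nbs Fbs].
  inversion Hp; subst.
  apply typed_PSend_inv in HT as (tbs & B & S & Hin & Hv & HP' & t).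
  apply teq_TSel_branches in t. destruct (t _ _ _ Hin) as (X' & Hin' & tX).
  destruct Hm as [(B0 & X & Hin0 & ->) | [Hl _]].
  - destruct (NoDup_blabel_In_unique _ _ _ _ _ _ Nbs Hin' Hin0) as [<- <-].
    apply sc_check_out; [eapply tEq; eauto|exact (Fbs _ Hin')|exact Hv].
  - exfalso. exact (Hl (in_map blabel _ _ Hin')).
Qed.

Lemma sound_config_input P P' M M' l v :
  ptrans P (AIn l v) P' -> mtrans M (AOut l v) M' ->
  sound_config (P, M) -> sound_config (P', M').
Proof.
  intros Hp Hm HI. inversion HI as [? T HT HN| | | |? tbs l0 B T v0 HT Hin HN Hv|];
    subst; try (inversion Hm; fail).
  - exfalso. eapply synth_no_AOut; eauto.
  - inversion Hm; subst. inversion Hp as [| |pbs l1 x P0 v1 Hx| |]; subst.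
    apply typed_PBranch_inv in HT as (tbs' & Npbs & Hbranches & t).
    apply teq_sym, teq_TBra_branches in t. destruct (t _ _ _ Hin) as (T' & Hin' & tT).
    destruct (Hbranches _ _ _ Hin') as (x' & P0' & Hx' & HP0').
    destruct (NoDup_blabel_In_unique _ _ _ _ _ _ Npbs Hx Hx') as [<- <-].
    constructor; [|exact HN].
    apply (tEq _ _ _ T'); [|apply teq_sym, tT].
    eapply typed_pvsubst; [|exact Hv|exact HP0']. reflexivity.
Qed.

Lemma sound_config_strans c a c' : strans c a c' -> sound_config c -> sound_config c'.
Proof.
  destruct 1.
  - eapply sound_config_output; eassumption.
  - eapply sound_config_input; eassumption.
  - apply sound_config_env_out with l v; assumption.
  - apply sound_config_env_in with l v; assumption.
  - apply sound_config_ptau; assumption.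
  - apply sound_config_mtau; assumption.
Qed.

Lemma sound_config_wtrans c t c' : wtrans c t c' -> sound_config c -> sound_config c'.
Proof. induction 1; eauto using sound_config_strans. Qed.

Theorem mainTheorem1 (S : stype) (P : proc) :
  wf_stype S -> pguarded P ->
  (exists (t : list act) (P' : proc), wtrans (P, synth S) t (P', MNoP)) ->
  ~ typed nil venv_empty P S.
Proof.
  intros HS _ (t & P' & Hrun) HP.
  apply (sound_config_not_blame_proc P').
  apply (sound_config_wtrans _ _ _ Hrun).
  constructor; [exact HP|apply wf_stype_distinct_labels, HS].
Qed.
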